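(* Assume (A1) and (A2). Let $\varepsilon_1\ge0$ and let $\beta>\bar\beta_2$ and $\beta>\bar\beta_3$. Then any $x\in\mathcal{C}$ with $\|\nabla g(x)\|\le\varepsilon_1$ is an $(\varepsilon_1,2\varepsilon_1)$-approximate first-order critical point of $\min f(x)$ s.t. $h(x)=0$, namely $$\|h(x)\|\le\frac{\varepsilon_1}{\beta\underline{\sigma}}\le\varepsilon_1\quad\text{and}\quad\|\mathrm{grad}_{\mathcal{M}_x}f(x)\|\le\Big(1+\frac{\overline{C_\lambda}}{\beta\underline{\sigma}}\Big)\varepsilon_1\le2\varepsilon_1,$$ where $\underline{\sigma}\le\min_{x\in\mathcal{C}}\sigma_{\min}(\mathrm{D}h(x))$ is the constant of (A1).
   Context: Let $\mathcal{E}$ be a Euclidean space with inner product $\langle\cdot,\cdot\rangle$ and norm $\|\cdot\|$ (2-norm on $\mathbb{R}^m$), and $f\colon\mathcal{E}\to\mathbb{R}$, $h\colon\mathcal{E}\to\mathbb{R}^m$ be $C^\infty$. $\mathrm{D}h(x)$ is the differential, $\mathrm{D}h(x)^*$ its adjoint, $\sigma_1,\sigma_{\min}=\sigma_m$ the largest and $m$-th singular values. Let $\mathcal{D}=\{x:\operatorname{rank}\mathrm{D}h(x)=m\}$, and for $x\in\mathcal{D}$, $\lambda(x)=(\mathrm{D}h(x)^* )^\dagger[\nabla f(x)]$ (Moore–Penrose), $C^\infty$ on $\mathcal{D}$. Fletcher's augmented Lagrangian: $g(x)=f(x)-\langle h(x),\lambda(x)\rangle+\beta\|h(x)\|^2$,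 $\beta\ge0$. For $x\in\mathcal{D}$, $\mathcal{M}_x=\{y:h(y)=h(x)\}$ and $\mathrm{grad}_{\mathcal{M}_x}f(x)=\nabla f(x)-\mathrm{D}h(x)^*[\lambda(x)]$. (A1): there are $R,\underline{\sigma}>0$ such that every $x\in\mathcal{C}=\{x:\|h(x)\|\le R\}$ satisfies $\sigma_{\min}(\mathrm{D}h(x))\ge\underline{\sigma}$. (A2): $\mathcal{M}=\{x:h(x)=0\}$ and $\mathcal{C}$ are compact. For $x\in\mathcal{C}$: $C_\lambda(x)=\|\mathrm{D}\lambda(x)\|_{\mathrm{op}}$, $\beta_2(x)=C_\lambda(x)/\sigma_{\min}(\mathrm{D}h(x))$, $\beta_3(x)=1/\sigma_{\min}(\mathrm{D}h(x))$; $\overline{C_\lambda}=\max_{x\in\mathcal{C}}C_\lambda(x)$, $\bar\beta_i=\max_{x\in\mathcal{C}}\beta_i(x)$. $x\in\mathcal{D}$ is an $(\varepsilon_0,\varepsilon_1)$-approximate first-order critical point if $\|h(x)\|\le\varepsilon_0$ and $\|\mathrm{grad}_{\mathcal{M}_x}f(x)\|\le\varepsilon_1$. *)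

From HB Require Import structures.
From mathcomp Require Import all_boot all_order all_algebra.
From mathcomp Require Import all_classical all_reals all_analysis.
Set Implicit Arguments. Unset Strict Implicit. Unset Printing Implicit Defensive.
Import Order.TTheory GRing.Theory Num.Theory.
Import numFieldNormedType.Exports.
Local Open Scope classical_set_scope.
Local Open Scope ring_scope.

(* The Euclidean space E is R^n, represented by row vectors 'rV[R]_n;
   R^m likewise by 'rV[R]_m.  Linear maps act on row vectors on the right. *)

Section Defs.
Variable R : realType.

Definition inner (k : nat) (u v : 'rV[R]_k) : R := \sum_(i < k) u 0 i * v 0 i.
Definition enorm (k : nat) (v : 'rV[R]_k) : R := Num.sqrt (inner v v).

Fixpoint dirn (V W : normedModType R) (vs : seq V) (f : V -> W) : V -> W :=
  match vs with
  | [::] => f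
  | v :: vs' => fun x => derive (dirn vs' f) x v
  end.
Definition Cinf (V W : normedModType R) (f : V -> W) : Prop :=
  forall (vs : seq V) (x : V), differentiable (dirn vs f) x.

Variables n m : nat.

Definition grad (f : 'rV[R]_n -> R) (x : 'rV[R]_n) : 'rV[R]_n :=
  \row_i ('d f x (delta_mx 0 i)).

(* matrix of the differential Dh(x): Dh(x)[v] = v *m jac h x;
   its adjoint Dh(x)^* is w |-> w *m (jac h x)^T *)
Definition jac (h : 'rV[R]_n -> 'rV[R]_m) (x : 'rV[R]_n) : 'M[R]_(n, m) :=
  lin1_mx ('d h x).

(* Moore-Penrose pseudoinverse (the unique matrix satisfying the four
   Penrose conditions; here for maps acting on row vectors on the right) *)
Definition is_MP_pinv (p q : nat) (A : 'M[R]_(p, q)) (P : 'M[R]_(q, p)) : Prop :=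
  [/\ A *m P *m A = A, P *m A *m P = P,
      (A *m P)^T = A *m P & (P *m A)^T = P *m A].
Definition MP_pinv (p q : nat) (A : 'M[R]_(p, q)) : 'M[R]_(q, p) :=
  xget 0 [set P | is_MP_pinv A P].

(* lambda(x) = (Dh(x)^* )^dagger [grad f(x)] *)
Definition lam (f : 'rV[R]_n -> R) (h : 'rV[R]_n -> 'rV[R]_m) (x : 'rV[R]_n)
  : 'rV[R]_m := grad f x *m MP_pinv (jac h x)^T.

Definition gradM (f : 'rV[R]_n -> R) (h : 'rV[R]_n -> 'rV[R]_m) (x : 'rV[R]_n)
  : 'rV[R]_n := grad f x - lam f h x *m (jac h x)^T.

Definition fletcher (f : 'rV[R]_n -> R) (h : 'rV[R]_n -> 'rV[R]_m) (beta : R)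
  (x : 'rV[R]_n) : R :=
  f x - inner (h x) (lam f h x) + beta * enorm (h x) ^+ 2.

(* sigma_min(Dh(x)) = m-th singular value of the linear map
   Dh(x) : R^n -> R^m, i.e. min over unit u in R^m of ||Dh(x)^* u|| *)
Definition sigma_min (J : 'M[R]_(n, m)) : R :=
  inf [set enorm (u *m J^T) | u in [set u : 'rV[R]_m | enorm u = 1]].

Definition opnorm (L : 'rV[R]_n -> 'rV[R]_m) : R :=
  sup [set enorm (L v) | v in [set v : 'rV[R]_n | enorm v <= 1]].

Definition C_lam (f : 'rV[R]_n -> R) (h : 'rV[R]_n -> 'rV[R]_m) (x : 'rV[R]_n)
  : R := opnorm ('d (lam f h) x).

Definition is_max_on (S : set 'rV[R]_n) (phi : 'rV[R]_n -> R) (b : R) : Prop :=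
  (exists2 y, S y & phi y = b) /\ (forall y, S y -> phi y <= b).

(* (eps0, eps1)-approximate first-order critical point (x in D required) *)
Definition approx_fo_crit (f : 'rV[R]_n -> R) (h : 'rV[R]_n -> 'rV[R]_m)
  (eps0 eps1 : R) (x : 'rV[R]_n) : Prop :=
  [/\ \rank (jac h x) = m, enorm (h x) <= eps0 & enorm (gradM f h x) <= eps1].

End Defs.

(* At a point x of C, (A1) gives sigma_min(Dh(x)) >= sigl > 0, so Dh^* Dh is
   invertible near x, lambda = grad f Dh (Dh^* Dh)^-1 is differentiable at x, and
     grad g(x) = grad_{M_x} f(x) + 2 beta Dh(x)^*[h(x)] - D lambda(x)^*[h(x)].
   The first summand is orthogonal to the range of Dh(x)^*, which contains the
   second, and the third has norm at most C_lambda(x) ||h(x)||.  Testing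
   grad g(x) against each of the two orthogonal summands bounds both by
   ||grad g(x)|| + C_lambda(x) ||h(x)||.  Since ||Dh(x)^*[h(x)]|| >=
   sigma_min ||h(x)|| and C_lambda(x) < beta sigma_min, this gives
   beta sigma_min ||h(x)|| <= eps1, and then the bound on grad_{M_x} f(x). *)

From HB Require Import structures.
From mathcomp Require Import all_boot all_order all_algebra.
From mathcomp Require Import all_classical all_reals all_analysis.
From mathcomp Require Import ring lra.
Import Order.TTheory GRing.Theory Num.Theory.
Import numFieldNormedType.Exports.
Local Open Scope classical_set_scope.
Local Open Scope ring_scope.

Section Differentiable.
Context {R : realType} {V : normedModType R}.

Lemma differentiable_near_eq {W : normedModType R} (f g : V -> W) x :
  (\forall y \near x, f y = g y) -> differentiable g x -> differentiable f x.
Proof.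
move=> fg dg.
have fxgx : f x = g x := nbhs_singleton fg.
have fg0 : \forall z \near (0 : V), f (z + x) = g (z + x).
  by move: fg; rewrite (near_shift 0 x); apply: filterS => z /=; rewrite subr0.
have dfg : f \o shift x = cst (f x) + 'd g x +o_ 0 id.
  apply/eqaddoP => e e0; have /eqaddoP /(_ e e0) := diff_locally dg.
  apply: filterS2 fg0 => z fgz.
  suff -> : (f \o +%R^~ x - (cst (f x) + 'd g x)) z =
            (g \o +%R^~ x - (cst (g x) + 'd g x)) z by [].
  by rewrite !fctE /= fgz fxgx.
have dfE : 'd f x = 'd g x :> (V -> W).
  by apply: diff_unique => //; exact: diff_continuous.
by apply/diff_locallyP; rewrite dfE; split => //; exact: diff_continuous.
Qed.

Lemma differentiable_big_sum {W : normedModType R} (I : Type) (r : seq I)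
    (P : pred I) (F : I -> V -> W) x :
  (forall i, differentiable (F i) x) ->
  differentiable (fun y => \sum_(i <- r | P i) F i y) x.
Proof.
move=> dF; rewrite -fct_sumE; elim/big_ind: _ => //.
by move=> ? ? ? ?; apply: differentiableD.
Qed.

Lemma differentiable_big_prod (I : Type) (r : seq I) (P : pred I)
    (F : I -> V -> R) x :
  (forall i, differentiable (F i) x) ->
  differentiable (fun y => \prod_(i <- r | P i) F i y) x.
Proof.
move=> dF; rewrite -fct_prodE; elim/big_ind: _ => //.
by move=> ? ? ? ?; apply: differentiableM.
Qed.

Lemma differentiable_entry {p q} (F : V -> 'M[R]_(p, q)) x i j :
  differentiable F x -> differentiable (fun y => F y i j) x.
Proof. by move=> dF; exact: differentiable_comp dF (differentiable_coord _ i j). Qed.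

Lemma derive_entry {p q} (F : V -> 'M[R]_(p, q)) x v i j :
  differentiable F x -> 'D_v (fun y => F y i j) x = 'D_v F x i j.
Proof. by move=> dF; rewrite (derive_mx (@diff_derivable _ _ _ _ _ v dF)) mxE. Qed.

Definition entrywise_differentiable {p q} (F : V -> 'M[R]_(p, q)) x :=
  forall i j, differentiable (fun y => F y i j) x.

Lemma entrywise_differentiableW {p q} (F : V -> 'M[R]_(p, q)) x :
  entrywise_differentiable F x -> differentiable F x.
Proof.
move=> dF.
have -> : F = (fun y => \sum_(i < p) \sum_(j < q) F y i j *: delta_mx i j).
  by apply/funext => y; rewrite -matrix_sum_delta.
do 2!apply: differentiable_big_sum => ?; exact: differentiableZl.
Qed.

Lemma entrywise_differentiable_mul {p q r} (F : V -> 'M[R]_(p, q))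
    (G : V -> 'M[R]_(q, r)) x :
  entrywise_differentiable F x -> entrywise_differentiable G x ->
  entrywise_differentiable (fun y => F y *m G y) x.
Proof.
move=> dF dG i j; under eq_fun do rewrite mxE.
by apply: differentiable_big_sum => k; apply: differentiableM.
Qed.

Lemma entrywise_differentiable_tr {p q} (F : V -> 'M[R]_(p, q)) x :
  entrywise_differentiable F x -> entrywise_differentiable (fun y => (F y)^T) x.
Proof. by move=> dF i j; under eq_fun do rewrite mxE; apply: dF. Qed.

Lemma entrywise_differentiable_scale {p q} (k : V -> R) (F : V -> 'M[R]_(p, q)) x :
  differentiable k x -> entrywise_differentiable F x ->
  entrywise_differentiable (fun y => k y *: F y) x.
Proof.
by move=> dk dF i j; under eq_fun do rewrite mxE; apply: differentiableM.
Qed.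

Lemma differentiable_det {p} (F : V -> 'M[R]_p) x :
  entrywise_differentiable F x -> differentiable (fun y => \det (F y)) x.
Proof.
move=> dF; apply: differentiable_big_sum => s.
apply: differentiableM; first exact: differentiable_cst.
by apply: differentiable_big_prod => i; apply: dF.
Qed.

Lemma entrywise_differentiable_adj {p} (F : V -> 'M[R]_p) x :
  entrywise_differentiable F x -> entrywise_differentiable (fun y => \adj (F y)) x.
Proof.
move=> dF i j; under eq_fun do rewrite mxE.
apply: differentiableM; first exact: differentiable_cst.
by apply: differentiable_det => k l; under eq_fun do rewrite !mxE; apply: dF.
Qed.

Lemma Cinf_differentiable {W : normedModType R} (f : V -> W) x :
  Cinf f -> differentiable f x.
Proof. by move=> Cf; exact: Cf [::] x. Qed.

Lemma Cinf_differentiable_diff {W : normedModType R} (f : V -> W) v x :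
  Cinf f -> differentiable (fun y => 'd f y v) x.
Proof.
move=> Cf; have -> : (fun y => 'd f y v) = derive f ^~ v.
  by apply/funext => y; rewrite deriveE //; exact: Cinf_differentiable.
exact: Cf [:: v] x.
Qed.

End Differentiable.

Lemma le_of_sqr_le_mul {R : realDomainType} (u t : R) :
  0 <= u -> 0 <= t -> u ^+ 2 <= u * t -> u <= t.
Proof. by move=> ? ? ?; nra. Qed.

Section InnerProduct.
Context {R : realType} {k : nat}.
Implicit Types (u v w : 'rV[R]_k) (a : R).

Lemma innerE u v : inner u v = (u *m v^T) 0 0.
Proof. by rewrite /inner mxE; apply: eq_bigr => i _; rewrite mxE. Qed.

Lemma innerC u v : inner u v = inner v u.
Proof. by rewrite /inner; apply: eq_bigr => i _; rewrite mulrC. Qed.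

Lemma innerDl u v w : inner (u + v) w = inner u w + inner v w.
Proof. by rewrite !innerE mulmxDl mxE. Qed.

Lemma innerDr u v w : inner w (u + v) = inner w u + inner w v.
Proof. by rewrite innerC innerDl !(innerC w). Qed.

Lemma innerZl a u v : inner (a *: u) v = a * inner u v.
Proof. by rewrite !innerE -scalemxAl mxE. Qed.

Lemma innerZr a u v : inner u (a *: v) = a * inner u v.
Proof. by rewrite innerC innerZl innerC. Qed.

Lemma innerNl u v : inner (- u) v = - inner u v.
Proof. by rewrite -scaleN1r innerZl mulN1r. Qed.

Lemma innerNr u v : inner u (- v) = - inner u v.
Proof. by rewrite innerC innerNl innerC. Qed.

Lemma innerBr u v w : inner w (u - v) = inner w u - inner w v.
Proof. by rewrite innerDr innerNr. Qed.

Lemma inner0l v : inner 0 v = 0.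
Proof. by rewrite innerE mul0mx mxE. Qed.

Lemma inner0r v : inner v 0 = 0.
Proof. by rewrite innerC inner0l. Qed.

Lemma inner_sumr (I : Type) (r : seq I) (P : pred I) (F : I -> 'rV[R]_k) u :
  inner u (\sum_(i <- r | P i) F i) = \sum_(i <- r | P i) inner u (F i).
Proof.
elim/big_rec2: _; first exact: inner0r.
by move=> i ? ? _ <-; rewrite innerDr.
Qed.

Lemma inner_deltal i u : inner (delta_mx 0 i) u = u 0 i.
Proof.
rewrite /inner (bigD1 i) //= big1 ?addr0; first by rewrite mxE !eqxx mul1r.
by move=> j ji; rewrite mxE eqxx /= (negbTE ji) mul0r.
Qed.

Lemma inner_ge0 v : 0 <= inner v v.
Proof. by apply: sumr_ge0 => i _; rewrite -expr2 sqr_ge0. Qed.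

Lemma inner_eq0 v : (inner v v == 0) = (v == 0).
Proof.
apply/idP/eqP => [|->]; last by rewrite inner0l.
rewrite /inner psumr_eq0 => [/allP v0|i _]; last by rewrite -expr2 sqr_ge0.
apply/rowP => i; apply/eqP; rewrite mxE -sqrf_eq0 expr2.
exact: v0 (mem_index_enum i).
Qed.

Lemma enorm_ge0 v : 0 <= enorm v.
Proof. exact: sqrtr_ge0. Qed.

Lemma enorm_sqr v : enorm v ^+ 2 = inner v v.
Proof. by rewrite sqr_sqrtr // inner_ge0. Qed.

Lemma enorm0 : enorm (0 : 'rV[R]_k) = 0.
Proof. by rewrite /enorm inner0l sqrtr0. Qed.

Lemma enorm_eq0 v : (enorm v == 0) = (v == 0).
Proof. by rewrite -inner_eq0 -enorm_sqr sqrf_eq0. Qed.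

Lemma enorm_gt0 v : (0 < enorm v) = (v != 0).
Proof. by rewrite lt_def enorm_eq0 enorm_ge0 andbT. Qed.

Lemma enormZ a v : enorm (a *: v) = `|a| * enorm v.
Proof.
by rewrite /enorm innerZl innerZr mulrA -expr2 sqrtrM ?sqr_ge0 // sqrtr_sqr.
Qed.

Lemma inner_le_enorm u v : inner u v <= enorm u * enorm v.
Proof.
have [->|v0] := eqVneq v 0; first by rewrite inner0r enorm0 mulr0.
have c0 : 0 < inner v v by rewrite lt_def inner_eq0 v0 inner_ge0.
suff CS : inner u v ^+ 2 <= inner u u * inner v v.
  rewrite (le_trans (ler_norm _)) // -sqrtr_sqr -sqrtrM ?inner_ge0 //.
  by rewrite ler_sqrt // mulr_ge0 // inner_ge0.
have := inner_ge0 (inner v v *: u - inner u v *: v).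
rewrite !innerDl !innerDr !innerNl !innerNr !innerZl !innerZr (innerC v u).
by move=> ?; nra.
Qed.

Lemma enormD u v : enorm (u + v) <= enorm u + enorm v.
Proof.
rewrite -(@ler_pXn2r _ 2) ?nnegrE ?addr_ge0 ?enorm_ge0 //.
rewrite enorm_sqr innerDl !innerDr (innerC v u) sqrrD !enorm_sqr.
by have := inner_le_enorm u v; lra.
Qed.

Lemma enorm_sum (I : Type) (r : seq I) (P : pred I) (F : I -> 'rV[R]_k) :
  enorm (\sum_(i <- r | P i) F i) <= \sum_(i <- r | P i) enorm (F i).
Proof.
elim/big_ind2: _ => [|? ? ? ? ? ?|//]; first by rewrite enorm0.
by apply: le_trans (enormD _ _) _; apply: lerD.
Qed.

Lemma enorm_entry v i : `|v 0 i| <= enorm v.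
Proof.
rewrite -sqrtr_sqr ler_sqrt ?inner_ge0 // /inner (bigD1 i) //= -expr2.
by rewrite lerDl; apply: sumr_ge0 => j _; rewrite -expr2 sqr_ge0.
Qed.

Lemma enorm_le_orthogonal_sum {u v w a} :
  inner u v = 0 -> enorm (u + v - w) <= a -> enorm u <= a + enorm w.
Proof.
move=> uv le_a; have a0 := le_trans (enorm_ge0 _) le_a.
apply: le_of_sqr_le_mul; rewrite ?addr_ge0 ?enorm_ge0 //.
have -> : enorm u ^+ 2 = inner u (u + v - w) + inner u w.
  by rewrite enorm_sqr innerBr innerDr uv addr0 subrK.
rewrite mulrDr lerD ?inner_le_enorm //.
exact: le_trans (inner_le_enorm _ _) (ler_wpM2l (enorm_ge0 _) le_a).
Qed.

End InnerProduct.

Lemma inner_mulmxl {R : realType} {p q : nat} (u : 'rV[R]_p) (A : 'M[R]_(p, q))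
    (v : 'rV[R]_q) :
  inner (u *m A) v = inner u (v *m A^T).
Proof. by rewrite !innerE trmx_mul trmxK mulmxA. Qed.

Section SingularValueBounds.
Context {R : realType} {n m : nat}.

Lemma sigma_min_le (J : 'M[R]_(n, m)) (u : 'rV[R]_m) :
  sigma_min J * enorm u <= enorm (u *m J^T).
Proof.
have [->|u0] := eqVneq u 0; first by rewrite enorm0 mulr0 enorm_ge0.
have u_gt0 : 0 < enorm u by rewrite enorm_gt0.
set S := [set enorm (w *m J^T) | w in [set w | enorm w = 1]].
have lbS : has_lbound S by exists 0 => _ [w _ <-]; apply: enorm_ge0.
have unit_u : enorm ((enorm u)^-1 *: u) = 1.
  by rewrite enormZ ger0_norm ?invr_ge0 ?enorm_ge0 // mulVf // gt_eqF.
have := ge_inf lbS (ex_intro2 _ _ _ unit_u erefl).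
rewrite -scalemxAl enormZ ger0_norm ?invr_ge0 ?enorm_ge0 //.
by rewrite -ler_pdivlMr // mulrC.
Qed.

Lemma unitmx_gram (J : 'M[R]_(n, m)) : 0 < sigma_min J -> J^T *m J \in unitmx.
Proof.
move=> s_gt0; rewrite unitmxE unitfE; apply/negP => /det0P [v v0 vJJ].
have : v *m J^T == 0.
  by rewrite -inner_eq0 inner_mulmxl trmxK -mulmxA vJJ inner0r.
rewrite -enorm_eq0 => /eqP vJ0; have := sigma_min_le J v.
by rewrite vJ0 pmulr_rle0 // leNgt enorm_gt0 v0.
Qed.

Lemma opnorm_has_ub (L : {linear 'rV[R]_n -> 'rV[R]_m}) :
  has_ubound [set enorm (L v) | v in [set v | enorm v <= 1]].
Proof.
exists (\sum_(i < n) enorm (L (delta_mx 0 i))) => _ [v /= v1 <-].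
rewrite {1}(row_sum_delta v) linear_sum (le_trans (enorm_sum _ _ _ _)) //.
apply: ler_sum => i _; rewrite linearZ enormZ ler_piMl ?enorm_ge0 //.
exact: le_trans (enorm_entry _ _) v1.
Qed.

Lemma opnorm_ge0 (L : {linear 'rV[R]_n -> 'rV[R]_m}) : 0 <= opnorm L.
Proof.
apply: le_trans (enorm_ge0 (L 0)) (ub_le_sup (opnorm_has_ub L) _).
by exists 0 => //=; rewrite enorm0 ler01.
Qed.

Lemma opnorm_le (L : {linear 'rV[R]_n -> 'rV[R]_m}) v :
  enorm (L v) <= opnorm L * enorm v.
Proof.
have [->|v0] := eqVneq v 0; first by rewrite linear0 !enorm0 mulr0.
have v_gt0 : 0 < enorm v by rewrite enorm_gt0.
have unit_v : enorm ((enorm v)^-1 *: v) <= 1.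
  by rewrite enormZ ger0_norm ?invr_ge0 ?enorm_ge0 // mulVf // gt_eqF.
have := ub_le_sup (opnorm_has_ub L) (ex_intro2 _ _ ((enorm v)^-1 *: v) unit_v erefl).
rewrite linearZ enormZ ger0_norm ?invr_ge0 ?enorm_ge0 //.
by rewrite -ler_pdivrMr // mulrC.
Qed.

Lemma enorm_adjoint_le (L : {linear 'rV[R]_n -> 'rV[R]_m}) (u : 'rV[R]_m) :
  enorm (\row_i inner u (L (delta_mx 0 i))) <= opnorm L * enorm u.
Proof.
set c := \row_i _.
have adjL v : inner c v = inner u (L v).
  rewrite {2}(row_sum_delta v) linear_sum inner_sumr {1}/inner.
  by apply: eq_bigr => i _; rewrite mxE linearZ innerZr mulrC.
apply: le_of_sqr_le_mul; rewrite ?mulr_ge0 ?enorm_ge0 ?opnorm_ge0 //.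
rewrite enorm_sqr adjL (le_trans (inner_le_enorm _ _)) //.
rewrite (mulrC (enorm c)) -mulrA mulrCA.
by apply: ler_wpM2l; [exact: enorm_ge0 | exact: opnorm_le].
Qed.

End SingularValueBounds.

Lemma mxrank_unitmx_gram {R : fieldType} {p q : nat} (A : 'M[R]_(p, q)) :
  A^T *m A \in unitmx -> \rank A = q.
Proof.
move=> U; apply/eqP; rewrite eqn_leq rank_leq_col /=.
by rewrite -{1}(mxrank_unit U) mxrankM_maxr.
Qed.

Section MoorePenrose.
Context {R : realType}.

Lemma is_MP_pinv_unique {p q} {A : 'M[R]_(p, q)} {P Q} :
  is_MP_pinv A P -> is_MP_pinv A Q -> P = Q.
Proof.
case=> [APA PAP AP PA] [AQA QAQ AQ QA].
have PE : P = P *m P^T *m A^T by rewrite -mulmxA -trmx_mul AP mulmxA PAP.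
have QE : Q = A^T *m Q^T *m Q by rewrite -trmx_mul QA QAQ.
have AtE : A^T = A^T *m (A *m Q) by rewrite -AQ -trmx_mul AQA.
have AtE' : A^T = P *m A *m A^T by rewrite -PA -trmx_mul mulmxA APA.
have -> : P = P *m A *m Q.
  rewrite {1}PE AtE !mulmxA -(mulmxA P) -trmx_mul AP.
  by rewrite (mulmxA P A P) PAP.
by rewrite {2}QE AtE' -!mulmxA (mulmxA A^T) -trmx_mul QA QAQ.
Qed.

Lemma MP_pinv_trmx {p q} (J : 'M[R]_(p, q)) :
  J^T *m J \in unitmx -> MP_pinv J^T = J *m invmx (J^T *m J).
Proof.
move=> U; set P := J *m invmx (J^T *m J).
have JtP : J^T *m P = 1%:M by rewrite mulmxA mulmxV.
have MP_P : is_MP_pinv J^T P.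
  split; first by rewrite JtP mul1mx.
  - by rewrite -mulmxA JtP mulmx1.
  - by rewrite JtP trmx1.
  - by rewrite !trmx_mul trmxK trmx_inv trmx_mul trmxK mulmxA.
apply: (is_MP_pinv_unique _ MP_P).
exact: (@xgetPex _ 0 [set P | is_MP_pinv J^T P] (ex_intro _ P MP_P)).
Qed.

End MoorePenrose.

Section InnerDerivative.
Context {R : realType} {V : normedModType R} {k : nat}.

Lemma differentiable_inner (F G : V -> 'rV[R]_k) x :
  differentiable F x -> differentiable G x ->
  differentiable (fun y => inner (F y) (G y)) x.
Proof.
move=> dF dG; apply: differentiable_big_sum => i.
by apply: differentiableM; apply: differentiable_entry.
Qed.

Lemma derive_inner (F G : V -> 'rV[R]_k) x v :
  differentiable F x -> differentiable G x ->
  'D_v (fun y => inner (F y) (G y)) x =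
  inner ('D_v F x) (G x) + inner (F x) ('D_v G x).
Proof.
move=> dF dG.
have dFi i : differentiable (fun y => F y 0 i) x by apply: differentiable_entry.
have dGi i : differentiable (fun y => G y 0 i) x by apply: differentiable_entry.
have -> : (fun y => inner (F y) (G y)) =
          \sum_(i < k) ((fun y => F y 0 i) * (fun y => G y 0 i)).
  by rewrite fct_sumE; apply/funext => y.
rewrite derive_sum => [|i]; last exact/diff_derivable/differentiableM.
rewrite /inner -big_split; apply: eq_bigr => i _.
rewrite deriveM; try exact: diff_derivable.
rewrite (derive_entry _ _ _ _ _ dF) (derive_entry _ _ _ _ _ dG).
by rewrite addrC /= [_ *: _]mulrC.
Qed.

End InnerDerivative.

Section Fletcher.
Context {R : realType} {n m : nat}.
Context {f : 'rV[R]_n -> R} {h : 'rV[R]_n -> 'rV[R]_m}.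

Lemma lamE x : (jac h x)^T *m jac h x \in unitmx ->
  lam f h x = grad f x *m (jac h x *m invmx ((jac h x)^T *m jac h x)).
Proof. by move=> U; rewrite /lam MP_pinv_trmx. Qed.

Lemma gradM_mulmx_jac x : (jac h x)^T *m jac h x \in unitmx ->
  gradM f h x *m jac h x = 0.
Proof.
by move=> U; rewrite /gradM lamE // mulmxBl -!mulmxA mulVmx // mulmx1 subrr.
Qed.

Hypotheses (Cf : Cinf f) (Ch : Cinf h).

Lemma entrywise_differentiable_grad x : entrywise_differentiable (grad f) x.
Proof.
move=> i j; under eq_fun do rewrite mxE.
exact: Cinf_differentiable_diff.
Qed.

Lemma entrywise_differentiable_jac x : entrywise_differentiable (jac h) x.
Proof.
move=> i j; under eq_fun do rewrite mxE.
by apply: differentiable_entry; exact: Cinf_differentiable_diff.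
Qed.

(* Near x, lambda is given by the adjugate formula for the inverse, a rational
   expression in the entries of grad f and Dh. *)
Lemma differentiable_lam x : (jac h x)^T *m jac h x \in unitmx ->
  differentiable (lam f h) x.
Proof.
move=> U; pose gram z := (jac h z)^T *m jac h z.
have dgram : entrywise_differentiable gram x.
  apply: entrywise_differentiable_mul; last exact: entrywise_differentiable_jac.
  exact/entrywise_differentiable_tr/entrywise_differentiable_jac.
have gram_unit : \forall z \near x, gram z \in unitmx.
  have ddet : differentiable (fun z => \det (gram z)) x.
    exact: differentiable_det.
  rewrite unitmxE unitfE in U.
  apply: filterS (cvgr_neq0 _ (differentiable_continuous ddet) U) => z.
  by rewrite unitmxE unitfE.
pose lam_adj z := grad f z *m (jac h z *m ((\det (gram z))^-1 *: \adj (gram z))).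
apply: (@differentiable_near_eq _ _ _ _ lam_adj).
  by apply: filterS gram_unit => z Uz; rewrite lamE // /invmx Uz.
apply/entrywise_differentiableW/entrywise_differentiable_mul.
  exact: entrywise_differentiable_grad.
apply: entrywise_differentiable_mul; first exact: entrywise_differentiable_jac.
apply: entrywise_differentiable_scale; last exact: entrywise_differentiable_adj.
apply: differentiableV; last by rewrite -unitfE -unitmxE.
exact: differentiable_det.
Qed.

Lemma grad_fletcher beta x : (jac h x)^T *m jac h x \in unitmx ->
  grad (fletcher f h beta) x =
  gradM f h x + (2 * beta) *: (h x *m (jac h x)^T)
  - \row_i inner (h x) ('d (lam f h) x (delta_mx 0 i)).
Proof.
move=> U; set L := lam f h.
have df : differentiable f x := Cinf_differentiable f x Cf.
have dh : differentiable h x := Cinf_differentiable h x Ch.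
have dL : differentiable L x := differentiable_lam x U.
have dhL : differentiable (fun y => inner (h y) (L y)) x.
  exact: differentiable_inner.
have dhh : differentiable (fun y => inner (h y) (h y)) x.
  exact: differentiable_inner.
have gE : fletcher f h beta =
    (f - (fun y => inner (h y) (L y))) + beta *: (fun y => inner (h y) (h y)).
  by apply/funext => y; rewrite /fletcher enorm_sqr.
have dfhL : differentiable (f - (fun y => inner (h y) (L y))) x.
  exact: differentiableB.
have dbhh : differentiable (beta *: (fun y => inner (h y) (h y))) x.
  exact: differentiableZ.
have dg : differentiable (fletcher f h beta) x by rewrite gE; apply: differentiableD.
apply/rowP => i; rewrite [LHS]mxE -deriveE // gE.
rewrite deriveD ?deriveB ?deriveZ; try exact: diff_derivable.
rewrite !derive_inner // (deriveE _ df) (deriveEjacobian _ dh) (deriveE _ dL).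
rewrite (innerC (h x) (_ *m _)) !inner_mulmxl !inner_deltal.
rewrite /gradM !mxE -/L -[beta *: _]/(beta * _).
by change (jacobian h x) with (jac h x); ring.
Qed.

Lemma fletcher_stationarity_bounds beta eps x :
  0 < sigma_min (jac h x) -> C_lam f h x < beta * sigma_min (jac h x) ->
  enorm (grad (fletcher f h beta) x) <= eps ->
  beta * sigma_min (jac h x) * enorm (h x) <= eps /\
  enorm (gradM f h x) <= eps + C_lam f h x * enorm (h x).
Proof.
set J := jac h x; set s := sigma_min J; set C := C_lam f h x.
move=> s_gt0 C_lt g_le; have U := unitmx_gram J s_gt0.
have C_ge0 : 0 <= C := opnorm_ge0 _.
have beta_gt0 : 0 < beta by rewrite -(pmulr_lgt0 _ s_gt0) (le_lt_trans C_ge0).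
set a := gradM f h x; set b := (2 * beta) *: (h x *m J^T).
set c := \row_i inner (h x) ('d (lam f h) x (delta_mx 0 i)).
have ab : inner a b = 0.
  by rewrite innerZr -inner_mulmxl gradM_mulmx_jac // inner0l mulr0.
have c_le : enorm c <= C * enorm (h x) := enorm_adjoint_le _ _.
rewrite grad_fletcher // -/a -/b -/c in g_le.
have a_le : enorm a <= eps + enorm c := enorm_le_orthogonal_sum ab g_le.
have b_le : enorm b <= eps + enorm c.
  apply: (enorm_le_orthogonal_sum (etrans (innerC b a) ab)).
  by rewrite [b + a]addrC.
have beta2_ge0 : 0 <= 2 * beta by rewrite mulr_ge0 // ltW.
rewrite /b enormZ ger0_norm // in b_le.
split; last by apply: (le_trans a_le); rewrite lerD2l.
have : beta * (s * enorm (h x)) <= beta * enorm (h x *m J^T).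
  by apply: ler_wpM2l; [exact: ltW | exact: sigma_min_le].
have : C * enorm (h x) <= beta * s * enorm (h x).
  by apply: ler_wpM2r; [exact: enorm_ge0 | exact: ltW].
lra.
Qed.

End Fletcher.

Theorem mainTheorem3 (R : realType) (n m : nat)
  (f : 'rV[R]_n -> R) (h : 'rV[R]_n -> 'rV[R]_m)
  (Cf : Cinf f) (Ch : Cinf h)
  (Rc sigl : R) (Rc_gt0 : 0 < Rc) (sigl_gt0 : 0 < sigl)
  (* (A1) with constants Rc, sigl *)
  (A1 : forall y, enorm (h y) <= Rc -> sigl <= sigma_min (jac h y))
  (* (A2) *)
  (A2M : compact [set y | h y = 0])
  (A2C : compact [set y | enorm (h y) <= Rc])
  (Cbar bbar2 bbar3 : R)
  (HCbar : is_max_on [set y | enorm (h y) <= Rc] (C_lam f h) Cbar)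
  (Hbbar2 : is_max_on [set y | enorm (h y) <= Rc]
              (fun y => C_lam f h y / sigma_min (jac h y)) bbar2)
  (Hbbar3 : is_max_on [set y | enorm (h y) <= Rc]
              (fun y => (sigma_min (jac h y))^-1) bbar3)
  (eps1 beta : R) (eps1_ge0 : 0 <= eps1)
  (beta_gt2 : bbar2 < beta) (beta_gt3 : bbar3 < beta)
  (x : 'rV[R]_n) (xC : enorm (h x) <= Rc)
  (Hg : enorm (grad (fletcher f h beta) x) <= eps1) :
  approx_fo_crit f h eps1 (2 * eps1) x
  /\ enorm (h x) <= eps1 / (beta * sigl)
  /\ enorm (gradM f h x) <= (1 + Cbar / (beta * sigl)) * eps1.
Proof.
set s := sigma_min (jac h x); set C := C_lam f h x.
have sigl_le : sigl <= s := A1 x xC.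
have s_gt0 : 0 < s := lt_le_trans sigl_gt0 sigl_le.
have C_lt : C < beta * s by rewrite -ltr_pdivrMr // (le_lt_trans (Hbbar2.2 x xC)).
have bs_gt1 : 1 < beta * s.
  by rewrite -ltr_pdivrMr // div1r (le_lt_trans (Hbbar3.2 x xC)).
have beta_gt0 : 0 < beta by rewrite -(pmulr_lgt0 _ s_gt0) (lt_trans ltr01).
have [hx_le gradM_le] : beta * s * enorm (h x) <= eps1 /\
                         enorm (gradM f h x) <= eps1 + C * enorm (h x).
  exact: fletcher_stationarity_bounds Cf Ch beta eps1 x s_gt0 C_lt Hg.
have eh_ge0 := enorm_ge0 (h x).
have eh_le : enorm (h x) <= beta * s * enorm (h x) by rewrite ler_peMl // ltW.
have Ceh_le : C * enorm (h x) <= beta * s * enorm (h x) by rewrite ler_wpM2r // ltW.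
have bsigl_gt0 : 0 < beta * sigl := mulr_gt0 beta_gt0 sigl_gt0.
have eh_sigl : enorm (h x) <= eps1 / (beta * sigl).
  rewrite ler_pdivlMr // mulrC (le_trans _ hx_le) // ler_wpM2r //.
  by rewrite ler_wpM2l // ltW.
have Ceh_Cbar : C * enorm (h x) <= Cbar * (eps1 / (beta * sigl)).
  by rewrite ler_pM // ?opnorm_ge0 // (HCbar.2 x xC).
split; [split => //|split => //].
- exact/mxrank_unitmx_gram/unitmx_gram.
- exact: le_trans eh_le hx_le.
- lra.
- have -> : (1 + Cbar / (beta * sigl)) * eps1 = eps1 + Cbar * (eps1 / (beta * sigl)).
    by ring.
  lra.
Qed.
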